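(* Let $T$ be a triangle which is not of type $(90^\circ,60^\circ,30^\circ)$. Then the 3-graph $F_{3,2}$ with vertex set $[5]$ and edges $123,145,245,345$ is forbidden for $T$.
   Context: A 3-graph is a 3-uniform hypergraph; $G$ is $F$-free if it has no (not necessarily induced) subhypergraph isomorphic to $F$. A triangle is of type $(\alpha,\beta,\gamma)$ if $\alpha\ge\beta\ge\gamma$ are its interior angles in degrees. For a triangle $T$ with side lengths $a,b,c$ and $\varepsilon>0$, with $\varepsilon'=\varepsilon\min\{a,b,c\}$, a triangle $A'B'C'$ is $\varepsilon$-congruent to $T$ if there are $A,B,C\in\mathbb{R}^2$ with $ABC$ congruent to $T$ and $A',B',C'$ within distance $\varepsilon'$ of $A,B,C$ respectively. For finite $P\subseteq\mathbb{R}^2$, $\mathcal{H}(T,P,\varepsilon)$ is the 3-graph on $P$ whose edges are triples forming triangles $\varepsilon$-congruent to $T$. A 3-graph $H$ is forbidden for $T$ if there exists $\varepsilon>0$ such that for every $P\subseteq\mathbb{R}^2$ with $|P|=|V(H)|$, $\mathcal{H}(T,P,\varepsilon)$ is $H$-free. *)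

From Stdlib Require Import Reals Lra List Permutation.
Import ListNotations.
Open Scope R_scope.

Definition point : Type := (R * R)%type.

Definition pdist (p q : point) : R :=
  sqrt ((fst p - fst q) ^ 2 + (snd p - snd q) ^ 2).

Definition collinear (A B C : point) : Prop :=
  (fst B - fst A) * (snd C - snd A) - (snd B - snd A) * (fst C - fst A) = 0.

Record plane_triangle : Type := Triangle {
  tA : point; tB : point; tC : point;
  t_nondeg : ~ collinear tA tB tC }.

Definition angle_deg (P Q S : point) : R :=
  acos (((fst P - fst Q) * (fst S - fst Q) + (snd P - snd Q) * (snd S - snd Q))
        / (pdist Q P * pdist Q S)) * 180 / PI.

Definition angA (T : plane_triangle) := angle_deg (tB T) (tA T) (tC T).
Definition angB (T : plane_triangle) := angle_deg (tA T) (tB T) (tC T).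
Definition angC (T : plane_triangle) := angle_deg (tA T) (tC T) (tB T).

Definition is_type (T : plane_triangle) (al be ga : R) : Prop :=
  al >= be /\ be >= ga /\
  Permutation [angA T; angB T; angC T] [al; be; ga].

Definition lab_congruent (A B C X Y Z : point) : Prop :=
  pdist A B = pdist X Y /\ pdist B C = pdist Y Z /\ pdist C A = pdist Z X.

Definition congruent (A B C : point) (T : plane_triangle) : Prop :=
  let X := tA T in let Y := tB T in let Z := tC T in
  lab_congruent A B C X Y Z \/ lab_congruent A B C X Z Y \/
  lab_congruent A B C Y X Z \/ lab_congruent A B C Y Z X \/
  lab_congruent A B C Z X Y \/ lab_congruent A B C Z Y X.

Definition min_side (T : plane_triangle) : R :=
  Rmin (pdist (tA T) (tB T)) (Rmin (pdist (tB T) (tC T)) (pdist (tC T) (tA T))).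

Definition eps_congruent (T : plane_triangle) (eps : R) (A' B' C' : point) : Prop :=
  let eps' := eps * min_side T in
  exists A B C : point, congruent A B C T /\
    pdist A' A <= eps' /\ pdist B' B <= eps' /\ pdist C' C <= eps'.

(** A 3-graph on the vertex set {0,...,n-1} given by a list of edges
    (each edge is a triple of distinct vertices < n). *)
Record hgraph3 : Type := HGraph3 {
  hg_n : nat;
  hg_edges : list (nat * nat * nat) }.

Definition HTP_edge (T : plane_triangle) (P : list point) (eps : R) (x y z : point) : Prop :=
  In x P /\ In y P /\ In z P /\ x <> y /\ y <> z /\ x <> z /\
  eps_congruent T eps x y z.

Definition HTP_contains (T : plane_triangle) (P : list point) (eps : R) (H : hgraph3) : Prop :=
  exists f : nat -> point,
    (forall i, (i < hg_n H)%nat -> In (f i) P) /\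
    (forall i j, (i < hg_n H)%nat -> (j < hg_n H)%nat -> f i = f j -> i = j) /\
    (forall i j k, In (i, j, k) (hg_edges H) -> HTP_edge T P eps (f i) (f j) (f k)).

Definition HTP_free (T : plane_triangle) (P : list point) (eps : R) (H : hgraph3) : Prop :=
  ~ HTP_contains T P eps H.

Definition forbidden (H : hgraph3) (T : plane_triangle) : Prop :=
  exists eps : R, eps > 0 /\
    forall P : list point, NoDup P -> length P = hg_n H ->
      HTP_free T P eps H.

(** F_{3,2}: vertex set [5] = {1,...,5} (encoded as 0..4), edges 123,145,245,345 *)
Definition F32 : hgraph3 :=
  HGraph3 5 [(0,1,2); (0,3,4); (1,3,4); (2,3,4)]%nat.

(* Suppose [p1], [p2], [p3] are apexes of triangles congruent to T over a common base [uv],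
   and [p1 p2 p3] is congruent to T as well.  Then [uv] is the same side [s] of T in all three
   triangles, so the apexes are three of the four images of [p1] under the symmetries of the
   segment [uv]: the identity and the reflections in the line [uv], in its perpendicular
   bisector and in its midpoint.  Three such images form a right triangle whose legs are
   [|q^2 - r^2| / s] and twice the height of T over [s] (with [q], [r] the other sides), and
   comparing with Heron's formula shows that it is congruent to T only for a 30-60-90 triangle.
   For the approximate statement, the exact conditions become a finite family of polynomial
   equations in the sides of T, one for each choice of which side of T every distance realises
   and of the side of [uv] on which each apex lies.  All of them fail, so their defects have a
   positive minimum, while eps-congruent points realise some choice with defect O(eps). *)

From Stdlib Require Import Reals Lra List Permutation Rgeom.
Import ListNotations.
Open Scope R_scope.

Definition perm3 (x y z a b c : R) : Prop :=
  (x = a /\ y = b /\ z = c) \/ (x = a /\ y = c /\ z = b) \/ (x = b /\ y = a /\ z = c) \/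
  (x = b /\ y = c /\ z = a) \/ (x = c /\ y = a /\ z = b) \/ (x = c /\ y = b /\ z = a).

Ltac destruct_perm3 :=
  unfold perm3 in *;
  repeat match goal with
  | H : _ \/ _ |- _ => destruct H
  | H : _ /\ _ |- _ => destruct H
  end; subst.

Ltac pick_perm3 :=
  first [ left; repeat split; reflexivity | right; pick_perm3 | repeat split; reflexivity ].

Ltac solve_perm3 := destruct_perm3; pick_perm3.

Lemma perm3_sym x y z a b c : perm3 x y z a b c -> perm3 a b c x y z.
Proof. intros; solve_perm3. Qed.

Lemma perm3_trans x y z a b c u v w :
  perm3 x y z a b c -> perm3 a b c u v w -> perm3 x y z u v w.
Proof. intros; solve_perm3. Qed.

Lemma perm3_rotate x y z a b c : perm3 x y z a b c -> perm3 y z x a b c.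
Proof. intros; solve_perm3. Qed.

Lemma perm3_swap12 x y z a b c : perm3 x y z a b c -> perm3 y x z a b c.
Proof. intros; solve_perm3. Qed.

Lemma perm3_mem x y z a b c :
  perm3 x y z a b c ->
  (x = a \/ x = b \/ x = c) /\ (y = a \/ y = b \/ y = c) /\ (z = a \/ z = b \/ z = c).
Proof. intros; destruct_perm3; auto 8. Qed.

Lemma perm3_pos x y z a b c :
  perm3 x y z a b c -> 0 < a -> 0 < b -> 0 < c -> 0 < x /\ 0 < y /\ 0 < z.
Proof. intros; destruct_perm3; auto. Qed.

Lemma perm3_sum_sq x y z a b c :
  perm3 x y z a b c -> x^2 + y^2 + z^2 = a^2 + b^2 + c^2.
Proof. intros; destruct_perm3; ring. Qed.

Lemma perm3_same_middle q s r q' r' a b c :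
  perm3 q s r a b c -> perm3 q' s r' a b c ->
  q'^2 - r'^2 = q^2 - r^2 \/ q'^2 - r'^2 = - (q^2 - r^2).
Proof. intros; destruct_perm3; (left; ring) || (right; ring). Qed.

Lemma perm3_Permutation x y z a b c : perm3 x y z a b c -> Permutation [x; y; z] [a; b; c].
Proof.
  intros; destruct_perm3.
  - reflexivity.
  - apply perm_skip, perm_swap.
  - apply perm_swap.
  - apply perm_trans with [b; a; c]; [apply perm_skip, perm_swap | apply perm_swap].
  - apply perm_trans with [a; c; b]; [apply perm_swap | apply perm_skip, perm_swap].
  - apply perm_trans with [b; c; a]; [apply perm_swap|].
    apply perm_trans with [b; a; c]; [apply perm_skip, perm_swap | apply perm_swap].
Qed.

(** * Exact rigidity *)

(* [heron a b c] is sixteen times the squared area of a triangle with sides [a], [b], [c]. *)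
Definition heron (a b c : R) : R :=
  2*a^2*b^2 + 2*b^2*c^2 + 2*c^2*a^2 - a^4 - b^4 - c^4.

Lemma heron_perm3 x y z a b c : perm3 x y z a b c -> heron x y z = heron a b c.
Proof. intros; destruct_perm3; unfold heron; ring. Qed.

Definition sides_30_60_90 (a b c : R) : Prop :=
  exists s, 0 < s /\ perm3 s (sqrt 3 * s) (2 * s) a b c.

Lemma pow2_inj x y : 0 <= x -> 0 <= y -> x^2 = y^2 -> x = y.
Proof. intros; apply Rsqr_inj; unfold Rsqr; lra. Qed.

Lemma sqrt3_mul_eq s l : 0 <= s -> 0 <= l -> l^2 = 3 * s^2 -> l = sqrt 3 * s.
Proof.
  intros hs hl e; apply pow2_inj; auto.
  - apply Rmult_le_pos; [apply sqrt_pos | exact hs].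
  - rewrite Rpow_mult_distr, pow2_sqrt; lra.
Qed.

(* Up to the factor [s], these are the squared sides of the triangle formed by an apex of
   a triangle [s q r] over its side [s] and the mirror images of that apex in the
   perpendicular bisector of [s] and in the line of [s]. *)
Lemma reflection_triangle_30_60_90 s q r x y w :
  0 < s -> 0 < q -> 0 < r -> perm3 x y w s q r ->
  s^2 * x^2 = (q^2 - r^2)^2 -> s^2 * y^2 = heron s q r ->
  s^2 * w^2 = (q^2 - r^2)^2 + heron s q r ->
  sides_30_60_90 s q r.
Proof.
  intros hs hq hr hp ex ey ew.
  assert (hs2 : 0 < s^2) by nra.
  assert (hw : w^2 = 2*q^2 + 2*r^2 - s^2).
  { apply (Rmult_eq_reg_l (s^2)); [rewrite ew; unfold heron; ring | lra]. }
  assert (hxy : x^2 + y^2 = w^2) by (apply (Rmult_eq_reg_l (s^2)); lra).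
  assert (hsum := perm3_sum_sq _ _ _ _ _ _ hp).
  assert (hright : s^2 = q^2 + r^2) by lra.
  assert (hK : heron s q r = 4 * q^2 * r^2).
  { unfold heron; replace (s^4) with ((s^2)^2) by ring; rewrite hright; ring. }
  rewrite hK in ey.
  destruct_perm3; try (exfalso; nra).
  - assert (es : s = 2 * q).
    { apply pow2_inj; [lra | lra | apply (Rmult_eq_reg_r (r^2)); nra]. }
    exists q; split; [exact hq|].
    rewrite es, (sqrt3_mul_eq q r); [pick_perm3 | lra | lra | nra].
  - assert (es : s = 2 * r).
    { apply pow2_inj; [lra | lra | apply (Rmult_eq_reg_r (q^2)); nra]. }
    exists r; split; [exact hr|].
    rewrite es, (sqrt3_mul_eq r q); [pick_perm3 | lra | lra | nra].
Qed.

Definition differ (o o' : bool) : R := if Bool.eqb o o' then 0 else 1.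

Section Rigidity.

Variables a b c : R.
Hypotheses (ha : 0 < a) (hb : 0 < b) (hc : 0 < c).

Lemma reflection_triangle_30_60_90_perm3 q s r x y w :
  perm3 q s r a b c -> perm3 x y w a b c ->
  s^2 * x^2 = (q^2 - r^2)^2 -> s^2 * y^2 = heron a b c ->
  s^2 * w^2 = (q^2 - r^2)^2 + heron a b c -> sides_30_60_90 a b c.
Proof.
  intros hp hx ex ey ew.
  assert (hsqr : perm3 s q r a b c) by (apply perm3_swap12; exact hp).
  destruct (perm3_pos _ _ _ _ _ _ hsqr ha hb hc) as [hs [hq hr]].
  rewrite <- (heron_perm3 _ _ _ _ _ _ hsqr) in ey, ew.
  destruct (reflection_triangle_30_60_90 s q r x y w hs hq hr) as [t [ht htp]];
    [eapply perm3_trans; [exact hx | apply perm3_sym, hsqr] | exact ex | exact ey | exact ew |].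
  exists t; split; [exact ht | eapply perm3_trans; eassumption].
Qed.

(* Every [q_i^2 - r_i^2] is [± (q1^2 - r1^2)], so each equation says that [s^2 x^2] is one of
   [0], [(q1^2 - r1^2)^2], [heron a b c] or their sum.  The first is excluded, and the
   three sides take the other three values exactly when the lemma above applies. *)
Lemma three_apexes_30_60_90 s q1 r1 q2 r2 q3 r3 x1 x2 x3 (o1 o2 o3 : bool) :
  perm3 q1 s r1 a b c -> perm3 q2 s r2 a b c -> perm3 q3 s r3 a b c ->
  perm3 x1 x2 x3 a b c ->
  4 * s^2 * x1^2 = (q1^2 - r1^2 - (q2^2 - r2^2))^2 + 4 * heron a b c * differ o1 o2 ->
  4 * s^2 * x2^2 = (q2^2 - r2^2 - (q3^2 - r3^2))^2 + 4 * heron a b c * differ o2 o3 ->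
  4 * s^2 * x3^2 = (q3^2 - r3^2 - (q1^2 - r1^2))^2 + 4 * heron a b c * differ o3 o1 ->
  sides_30_60_90 a b c.
Proof.
  intros p1 p2 p3 px e1 e2 e3.
  destruct (perm3_pos _ _ _ _ _ _ p1 ha hb hc) as [_ [hs _]].
  destruct (perm3_pos _ _ _ _ _ _ px ha hb hc) as [hx1 [hx2 hx3]].
  assert (0 < s^2 * x1^2) by (apply Rmult_lt_0_compat; apply pow_lt; lra).
  assert (0 < s^2 * x2^2) by (apply Rmult_lt_0_compat; apply pow_lt; lra).
  assert (0 < s^2 * x3^2) by (apply Rmult_lt_0_compat; apply pow_lt; lra).
  pose proof (perm3_rotate _ _ _ _ _ _ px).
  pose proof (perm3_rotate _ _ _ _ _ _ (perm3_rotate _ _ _ _ _ _ px)).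
  pose proof (perm3_swap12 _ _ _ _ _ _ px).
  pose proof (perm3_rotate _ _ _ _ _ _ (perm3_swap12 _ _ _ _ _ _ px)).
  pose proof (perm3_swap12 _ _ _ _ _ _ (perm3_rotate _ _ _ _ _ _ px)).
  destruct (perm3_same_middle _ _ _ _ _ _ _ _ p1 p2) as [w2 | w2];
  destruct (perm3_same_middle _ _ _ _ _ _ _ _ p1 p3) as [w3 | w3];
  rewrite w2, w3 in *; destruct o1, o2, o3; cbv [differ Bool.eqb] in e1, e2, e3;
  first
    [ exfalso; lra
    | match goal with
      | h : perm3 ?x ?y ?w a b c |- _ =>
          apply (reflection_triangle_30_60_90_perm3 q1 s r1 x y w p1 h); lra
      end ].
Qed.

End Rigidity.

(** * Defects of configurations *)

Definition pair_defect (K s x q r q' r' : R) (o o' : bool) : R :=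
  Rabs (4 * s^2 * x^2 - (q^2 - r^2 - (q'^2 - r'^2))^2 - 4 * K * differ o o').

(* The three side labellings [(q_i, s_i, r_i)] of the triangles [p_i u v], the labelling
   [(x1, x2, x3)] of [p1 p2 p3], and the sides of the line [uv] on which [p1], [p2], [p3] lie. *)
Definition config : Type :=
  (R * R * R) * (R * R * R) * (R * R * R) * (R * R * R) * (bool * bool * bool).

Definition orderings (a b c : R) : list (R * R * R) :=
  [(a, b, c); (a, c, b); (b, a, c); (b, c, a); (c, a, b); (c, b, a)].

Lemma in_orderings x y z a b c : In (x, y, z) (orderings a b c) <-> perm3 x y z a b c.
Proof.
  unfold orderings; simpl; split.
  - intros [h | [h | [h | [h | [h | [h | []]]]]]]; injection h; intros; subst; pick_perm3.
  - intros; destruct_perm3; tauto.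
Qed.

Definition configs (a b c : R) : list config :=
  let O := orderings a b c in
  let B := [true; false] in
  list_prod (list_prod (list_prod (list_prod O O) O) O) (list_prod (list_prod B B) B).

Lemma in_configs a b c q1 s1 r1 q2 s2 r2 q3 s3 r3 x1 x2 x3 (o1 o2 o3 : bool) :
  In ((q1, s1, r1), (q2, s2, r2), (q3, s3, r3), (x1, x2, x3), (o1, o2, o3)) (configs a b c) <->
  perm3 q1 s1 r1 a b c /\ perm3 q2 s2 r2 a b c /\ perm3 q3 s3 r3 a b c /\ perm3 x1 x2 x3 a b c.
Proof.
  unfold configs, config; cbv zeta; rewrite !in_prod_iff, !in_orderings.
  assert (hB : forall o : bool, In o [true; false]) by (intros []; simpl; auto).
  split; [tauto | intros [? [? [? ?]]]; repeat split; auto].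
Qed.

Definition defect (a b c : R) (t : config) : R :=
  let '((q1, s1, r1), (q2, s2, r2), (q3, s3, r3), (x1, x2, x3), (o1, o2, o3)) := t in
  Rabs (s1^2 - s2^2) + Rabs (s1^2 - s3^2)
  + pair_defect (heron a b c) s1 x1 q1 r1 q2 r2 o1 o2
  + pair_defect (heron a b c) s2 x2 q2 r2 q3 r3 o2 o3
  + pair_defect (heron a b c) s3 x3 q3 r3 q1 r1 o3 o1.

Lemma Rabs_nonpos_eq0 x : Rabs x <= 0 -> x = 0.
Proof. unfold Rabs; destruct Rcase_abs; lra. Qed.

Lemma defect_pos a b c t :
  0 < a -> 0 < b -> 0 < c -> ~ sides_30_60_90 a b c -> In t (configs a b c) ->
  0 < defect a b c t.
Proof.
  destruct t as [[[[[[q1 s1] r1] [[q2 s2] r2]] [[q3 s3] r3]] [[x1 x2] x3]] [[o1 o2] o3]].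
  intros ha hb hc hnot ht.
  apply in_configs in ht; destruct ht as [p1 [p2 [p3 px]]].
  unfold defect, pair_defect; apply Rnot_le_lt; intro h0; apply hnot.
  match type of h0 with
  | Rabs ?u1 + Rabs ?u2 + Rabs ?u3 + Rabs ?u4 + Rabs ?u5 <= 0 =>
      pose proof (Rabs_pos u1); pose proof (Rabs_pos u2); pose proof (Rabs_pos u3);
      pose proof (Rabs_pos u4); pose proof (Rabs_pos u5);
      assert (E1 : u1 = 0) by (apply Rabs_nonpos_eq0; lra);
      assert (E2 : u2 = 0) by (apply Rabs_nonpos_eq0; lra);
      assert (E3 : u3 = 0) by (apply Rabs_nonpos_eq0; lra);
      assert (E4 : u4 = 0) by (apply Rabs_nonpos_eq0; lra);
      assert (E5 : u5 = 0) by (apply Rabs_nonpos_eq0; lra)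
  end.
  destruct (perm3_pos _ _ _ _ _ _ p1 ha hb hc) as [_ [hs1 _]].
  destruct (perm3_pos _ _ _ _ _ _ p2 ha hb hc) as [_ [hs2 _]].
  destruct (perm3_pos _ _ _ _ _ _ p3 ha hb hc) as [_ [hs3 _]].
  assert (s2 = s1) by (apply pow2_inj; lra).
  assert (s3 = s1) by (apply pow2_inj; lra).
  subst s2 s3.
  apply (three_apexes_30_60_90 a b c ha hb hc s1 q1 r1 q2 r2 q3 r3 x1 x2 x3 o1 o2 o3);
    auto; lra.
Qed.

Lemma list_pos_lower_bound {A : Type} (l : list A) (f : A -> R) :
  (forall x, In x l -> 0 < f x) -> exists g, 0 < g /\ forall x, In x l -> g <= f x.
Proof.
  induction l as [|y l IH]; intros H.
  - exists 1; split; [lra | intros x []].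
  - destruct IH as [g [hg hl]]; [intros x hx; apply H; right; exact hx|].
    exists (Rmin g (f y)); split.
    + apply Rmin_pos; [exact hg | apply H; left; reflexivity].
    + intros x [<- | hx]; [apply Rmin_r | eapply Rle_trans; [apply Rmin_l | auto]].
Qed.

(** * Error estimates *)

Definition close (x y d : R) : Prop := - d <= x - y <= d.

Lemma mul_between x y X Y : - X <= x <= X -> - Y <= y <= Y -> - (X * Y) <= x * y <= X * Y.
Proof. intros; split; nra. Qed.

Lemma close_mul x y x0 y0 X Y dx dy :
  - X <= x0 <= X -> - Y <= y0 <= Y -> close x x0 dx -> close y y0 dy ->
  close (x * y) (x0 * y0) (X * dy + Y * dx + dx * dy).
Proof.
  unfold close; intros hx0 hy0 hx hy.
  pose proof (mul_between _ _ _ _ hx hy).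
  pose proof (mul_between _ _ _ _ hx0 hy).
  pose proof (mul_between _ _ _ _ hy0 hx).
  replace (x * y - x0 * y0) with ((x - x0) * (y - y0) + x0 * (y - y0) + y0 * (x - x0))
    by ring.
  lra.
Qed.

Lemma close_of_close_sq P K e :
  0 < K -> 0 <= P -> close (P^2) (K^2) (K * e) -> close P K e.
Proof.
  unfold close; intros hK hP [lo hi].
  assert (he : 0 <= e) by nra.
  replace (P^2 - K^2) with ((P - K) * (P + K)) in lo, hi by ring.
  destruct (Rle_lt_dec K P).
  - assert ((P - K) * K <= (P - K) * (P + K)) by (apply Rmult_le_compat_l; lra).
    split; nra.
  - assert ((K - P) * K <= (K - P) * (P + K)) by (apply Rmult_le_compat_l; lra).
    split; nra.
Qed.

Definition nonnegb (y : R) : bool := if Rle_dec 0 y then true else false.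

Lemma differ_nonnegb y z :
  (differ (nonnegb y) (nonnegb z) = 0 /\ 0 <= y * z) \/
  (differ (nonnegb y) (nonnegb z) = 1 /\ y * z <= 0).
Proof.
  unfold differ, nonnegb.
  destruct (Rle_dec 0 y), (Rle_dec 0 z); cbv [Bool.eqb]; [left | right | right | left];
    split; nra.
Qed.

(* [4 (y - z)^2 = 4 y^2 + 4 z^2 - 8 y z], and [4 |y z|] is near [K]. *)
Lemma close_sub_sq K E y z :
  0 < K -> 0 <= E <= K -> close (4 * y^2) K E -> close (4 * z^2) K E ->
  close (4 * (y - z)^2) (4 * K * differ (nonnegb y) (nonnegb z)) (8 * E).
Proof.
  intros hK hE hy hz.
  assert (hprod : close ((4 * y^2) * (4 * z^2)) (K * K) (K * E + K * E + E * E))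
    by (apply close_mul; auto; lra).
  destruct (differ_nonnegb y z) as [[-> hyz] | [-> hyz]].
  - assert (hP : close (4 * (y * z)) K (3 * E)).
    { apply close_of_close_sq; [lra | lra |]. unfold close in *; split; nra. }
    unfold close in *; split; nra.
  - assert (hP : close (- (4 * (y * z))) K (3 * E)).
    { apply close_of_close_sq; [lra | lra |]. unfold close in *; split; nra. }
    unfold close in *; split; nra.
Qed.

Definition sqd (p q : point) : R := (fst p - fst q)^2 + (snd p - snd q)^2.

Definition cross (u v p : point) : R :=
  (fst v - fst u) * (snd p - snd u) - (snd v - snd u) * (fst p - fst u).

Lemma cross_sq_sqd u v p :
  4 * cross u v p ^ 2 = 4 * sqd u v * sqd p u - (sqd u v + sqd p u - sqd v p)^2.
Proof. unfold cross, sqd; ring. Qed.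

(* In the frame with origin [u] and first axis along [uv], scaled by [2 |uv|], the point [p]
   has coordinates [sqd p u - sqd v p + sqd u v] and [2 cross u v p]. *)
Lemma sqd_apexes u v p q :
  4 * sqd u v * sqd p q =
  (sqd p u - sqd v p - (sqd q u - sqd v q))^2 + 4 * (cross u v p - cross u v q)^2.
Proof. unfold cross, sqd; ring. Qed.

Section Approximation.

Variables a b c d : R.
Hypothesis hd : 0 <= d <= 1.

Let N := 1 + a^2 + b^2 + c^2.

Definition near_sides (p q r : point) (x y z : R) : Prop :=
  perm3 x y z a b c /\
  close (sqd p q) (x^2) d /\ close (sqd q r) (y^2) d /\ close (sqd r p) (z^2) d.

Lemma side_sq_le x : x = a \/ x = b \/ x = c -> 0 <= x^2 <= N.
Proof. unfold N; intros [-> | [-> | ->]]; split; nra. Qed.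

Lemma near_sides_sq_le p q r x y z :
  near_sides p q r x y z -> (0 <= x^2 <= N) /\ (0 <= y^2 <= N) /\ (0 <= z^2 <= N).
Proof.
  intros [hp _]; destruct (perm3_mem _ _ _ _ _ _ hp) as [hx [hy hz]].
  split; [|split]; apply side_sq_le; assumption.
Qed.

Lemma close_mul_le_N x y t1 t2 :
  0 <= t1 <= N -> 0 <= t2 <= N -> close x t1 d -> close y t2 d ->
  close (x * y) (t1 * t2) (3 * N * d).
Proof.
  intros h1 h2 hx hy.
  assert (hN : 1 <= N) by (unfold N; nra).
  assert (h := close_mul x y t1 t2 N N d d ltac:(lra) ltac:(lra) hx hy).
  unfold close in *; split; nra.
Qed.

Lemma near_sides_cross_sq p u v q s r :
  near_sides p u v q s r -> close (4 * cross u v p ^ 2) (heron a b c) (33 * N * d).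
Proof.
  intros hn.
  destruct (near_sides_sq_le _ _ _ _ _ _ hn) as [hq [hs hr]].
  destruct hn as [hp [hW [hD hV]]].
  assert (hN : 1 <= N) by (unfold N; nra).
  rewrite <- (heron_perm3 _ _ _ _ _ _ (perm3_swap12 _ _ _ _ _ _ hp)), cross_sq_sqd.
  assert (hDW := close_mul_le_N _ _ _ _ hs hq hD hW).
  assert (hL : close (sqd u v + sqd p u - sqd v p) (s^2 + q^2 - r^2) (3 * d))
    by (unfold close in *; split; lra).
  assert (hB : - (2 * N) <= s^2 + q^2 - r^2 <= 2 * N) by lra.
  assert (hL2 := close_mul _ _ _ _ _ _ _ _ hB hB hL hL).
  replace (heron s q r) with (4 * (s^2 * q^2) - (s^2 + q^2 - r^2) * (s^2 + q^2 - r^2))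
    by (unfold heron; ring).
  unfold close in *; split; nra.
Qed.

Hypotheses (hK0 : 0 < heron a b c) (hK : 33 * N * d <= heron a b c).

Lemma pair_defect_le u v p p' q s r q' s' r' x :
  near_sides p u v q s r -> near_sides p' u v q' s' r' ->
  0 <= x^2 <= N -> close (sqd p p') (x^2) d ->
  pair_defect (heron a b c) s x q r q' r' (nonnegb (cross u v p)) (nonnegb (cross u v p'))
  <= 308 * N * d.
Proof.
  intros hn hn' hx hQ.
  assert (hN : 1 <= N) by (unfold N; nra).
  assert (hdN : d * d <= N * d) by nra.
  assert (hE : 0 <= 33 * N * d <= heron a b c) by (split; nra).
  assert (hYY := close_sub_sq _ _ _ _ hK0 hE (near_sides_cross_sq _ _ _ _ _ _ hn)
                   (near_sides_cross_sq _ _ _ _ _ _ hn')).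
  destruct (near_sides_sq_le _ _ _ _ _ _ hn) as [hq [hs hr]].
  destruct (near_sides_sq_le _ _ _ _ _ _ hn') as [hq' [_ hr']].
  destruct hn as [_ [hW [hD hV]]], hn' as [_ [hW' [_ hV']]].
  assert (hDQ := close_mul_le_N _ _ _ _ hs hx hD hQ).
  assert (hz : close (sqd p u - sqd v p - (sqd p' u - sqd v p'))
                 (q^2 - r^2 - (q'^2 - r'^2)) (4 * d))
    by (unfold close in *; split; lra).
  assert (hB : - (2 * N) <= q^2 - r^2 - (q'^2 - r'^2) <= 2 * N) by lra.
  assert (hz2 := close_mul _ _ _ _ _ _ _ _ hB hB hz hz).
  pose proof (sqd_apexes u v p p').
  unfold pair_defect; apply Rabs_le; unfold close in *; split; lra.
Qed.

Lemma realised_defect_le p1 p2 p3 u v q1 s1 r1 q2 s2 r2 q3 s3 r3 x1 x2 x3 :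
  near_sides p1 u v q1 s1 r1 -> near_sides p2 u v q2 s2 r2 -> near_sides p3 u v q3 s3 r3 ->
  near_sides p1 p2 p3 x1 x2 x3 ->
  defect a b c ((q1, s1, r1), (q2, s2, r2), (q3, s3, r3), (x1, x2, x3),
                (nonnegb (cross u v p1), nonnegb (cross u v p2), nonnegb (cross u v p3)))
  <= 928 * N * d.
Proof.
  intros n1 n2 n3 nx.
  destruct (near_sides_sq_le _ _ _ _ _ _ nx) as [hx1 [hx2 hx3]].
  pose proof (pair_defect_le _ _ _ _ _ _ _ _ _ _ _ n1 n2 hx1 (proj1 (proj2 nx))).
  pose proof (pair_defect_le _ _ _ _ _ _ _ _ _ _ _ n2 n3 hx2 (proj1 (proj2 (proj2 nx)))).
  pose proof (pair_defect_le _ _ _ _ _ _ _ _ _ _ _ n3 n1 hx3 (proj2 (proj2 (proj2 nx)))).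
  destruct n1 as [_ [_ [hD1 _]]], n2 as [_ [_ [hD2 _]]], n3 as [_ [_ [hD3 _]]].
  assert (Rabs (s1^2 - s2^2) <= 2 * d) by (apply Rabs_le; unfold close in *; lra).
  assert (Rabs (s1^2 - s3^2) <= 2 * d) by (apply Rabs_le; unfold close in *; lra).
  assert (d <= N * d) by (unfold N; nra).
  unfold defect; lra.
Qed.

End Approximation.

Definition near_congruent (a b c d : R) (p q r : point) : Prop :=
  exists x y z, near_sides a b c d p q r x y z.

Lemma approx_rigidity a b c :
  0 < a -> 0 < b -> 0 < c -> 0 < heron a b c -> ~ sides_30_60_90 a b c ->
  exists d0, 0 < d0 <= 1 /\
  forall d p1 p2 p3 u v, 0 <= d <= d0 ->
    near_congruent a b c d p1 u v -> near_congruent a b c d p2 u v ->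
    near_congruent a b c d p3 u v -> near_congruent a b c d p1 p2 p3 -> False.
Proof.
  intros ha hb hc hK hnot.
  destruct (list_pos_lower_bound (configs a b c) (defect a b c)
              (fun t => defect_pos a b c t ha hb hc hnot)) as [g [hg hmin]].
  set (N := 1 + a^2 + b^2 + c^2).
  assert (hN : 1 <= N) by (unfold N; nra).
  set (m := Rmin 1 (Rmin (heron a b c) g)).
  assert (hm : 0 < m) by (repeat apply Rmin_pos; lra).
  assert (hm1 : m <= 1) by apply Rmin_l.
  assert (hmK : m <= heron a b c) by (eapply Rle_trans; [apply Rmin_r | apply Rmin_l]).
  assert (hmg : m <= g) by (eapply Rle_trans; [apply Rmin_r | apply Rmin_r]).
  assert (hd0 : m / (1000 * N) * (1000 * N) = m) by (field; lra).
  assert (0 < m / (1000 * N)) by (apply Rdiv_lt_0_compat; lra).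
  exists (m / (1000 * N)); split; [split; nra|].
  intros d p1 p2 p3 u v hd [q1 [s1 [r1 n1]]] [q2 [s2 [r2 n2]]] [q3 [s3 [r3 n3]]]
    [x1 [x2 [x3 nx]]].
  assert (hdN : d * (1000 * N) <= m) by nra.
  assert (hd1 : 0 <= d <= 1) by nra.
  assert (hdK : 33 * N * d <= heron a b c) by nra.
  assert (ht : In ((q1, s1, r1), (q2, s2, r2), (q3, s3, r3), (x1, x2, x3),
                   (nonnegb (cross u v p1), nonnegb (cross u v p2), nonnegb (cross u v p3)))
                  (configs a b c))
    by (apply in_configs; repeat split; [exact (proj1 n1) | exact (proj1 n2) |
                                         exact (proj1 n3) | exact (proj1 nx)]).
  pose proof (hmin _ ht).
  assert (hle := realised_defect_le a b c d hd1 hK hdK _ _ _ _ _ _ _ _ _ _ _ _ _ _ _ _ _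
                   n1 n2 n3 nx).
  fold N in hle; lra.
Qed.

Lemma sqd_nonneg p q : 0 <= sqd p q.
Proof. unfold sqd; apply Rplus_le_le_0_compat; apply pow2_ge_0. Qed.

Lemma pdist_sq p q : pdist p q ^ 2 = sqd p q.
Proof. apply pow2_sqrt, sqd_nonneg. Qed.

Lemma pdist_nonneg p q : 0 <= pdist p q.
Proof. apply sqrt_pos. Qed.

Lemma pdist_sym p q : pdist p q = pdist q p.
Proof. unfold pdist; f_equal; ring. Qed.

Lemma pdist_triangle p q r : pdist p q <= pdist p r + pdist r q.
Proof.
  replace (pdist p q) with (dist_euc (fst p) (snd p) (fst q) (snd q))
    by (unfold pdist, dist_euc, Rsqr; f_equal; ring).
  replace (pdist p r) with (dist_euc (fst p) (snd p) (fst r) (snd r))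
    by (unfold pdist, dist_euc, Rsqr; f_equal; ring).
  replace (pdist r q) with (dist_euc (fst r) (snd r) (fst q) (snd q))
    by (unfold pdist, dist_euc, Rsqr; f_equal; ring).
  apply triangle.
Qed.

Lemma close_sqd x y A B e M :
  pdist x A <= e -> pdist y B <= e -> pdist A B <= M ->
  close (sqd x y) (pdist A B ^ 2) (4 * e * (M + e)).
Proof.
  intros hx hy hM.
  pose proof (pdist_triangle x y A); pose proof (pdist_triangle A y B).
  pose proof (pdist_triangle A B x); pose proof (pdist_triangle x B y).
  rewrite (pdist_sym y B), (pdist_sym A x) in *.
  pose proof (pdist_nonneg x y); pose proof (pdist_nonneg A B).
  rewrite <- pdist_sq; unfold close.
  replace (pdist x y ^ 2 - pdist A B ^ 2)
    with ((pdist x y - pdist A B) * (pdist x y + pdist A B)) by ring.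
  assert (h : - (2 * e * (2 * M + 2 * e)) <= (pdist x y - pdist A B) * (pdist x y + pdist A B)
              <= 2 * e * (2 * M + 2 * e))
    by (apply mul_between; lra).
  lra.
Qed.

Definition len_AB (T : plane_triangle) : R := pdist (tA T) (tB T).
Definition len_BC (T : plane_triangle) : R := pdist (tB T) (tC T).
Definition len_CA (T : plane_triangle) : R := pdist (tC T) (tA T).

Lemma congruent_perm3 A B C T :
  congruent A B C T ->
  perm3 (pdist A B) (pdist B C) (pdist C A) (len_AB T) (len_BC T) (len_CA T).
Proof.
  unfold congruent, lab_congruent, len_AB, len_BC, len_CA; intros h.
  repeat destruct h as [h | h]; destruct h as [-> [-> ->]];
    rewrite ?(pdist_sym (tA T) (tC T)), ?(pdist_sym (tB T) (tA T)), ?(pdist_sym (tC T) (tB T));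
    pick_perm3.
Qed.

Lemma eps_congruent_near T eps M x y z :
  len_AB T <= M -> len_BC T <= M -> len_CA T <= M -> eps_congruent T eps x y z ->
  near_congruent (len_AB T) (len_BC T) (len_CA T)
    (4 * (eps * min_side T) * (M + eps * min_side T)) x y z.
Proof.
  intros hA hB hC [A [B [C [hcong [hx [hy hz]]]]]].
  pose proof (congruent_perm3 A B C T hcong) as hp.
  assert (hM : forall l, l = len_AB T \/ l = len_BC T \/ l = len_CA T -> l <= M)
    by (intros l [-> | [-> | ->]]; assumption).
  destruct (perm3_mem _ _ _ _ _ _ hp) as [hAB [hBC hCA]].
  exists (pdist A B), (pdist B C), (pdist C A).
  split; [exact hp|]; split; [|split]; apply close_sqd; auto.
Qed.

Lemma heron_sides T :
  heron (len_AB T) (len_BC T) (len_CA T) = 4 * cross (tA T) (tB T) (tC T) ^ 2.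
Proof.
  replace (heron (len_AB T) (len_BC T) (len_CA T)) with
    (2 * len_AB T ^ 2 * len_BC T ^ 2 + 2 * len_BC T ^ 2 * len_CA T ^ 2
     + 2 * len_CA T ^ 2 * len_AB T ^ 2 - (len_AB T ^ 2) ^ 2 - (len_BC T ^ 2) ^ 2
     - (len_CA T ^ 2) ^ 2) by (unfold heron; ring).
  unfold len_AB, len_BC, len_CA; rewrite !pdist_sq; unfold sqd, cross; ring.
Qed.

Lemma heron_sides_pos T : 0 < heron (len_AB T) (len_BC T) (len_CA T).
Proof.
  rewrite heron_sides.
  assert (h : cross (tA T) (tB T) (tC T) <> 0) by exact (t_nondeg T).
  pose proof (Rsqr_pos_lt _ h); unfold Rsqr in *; nra.
Qed.

Lemma heron_pos_sides x y z :
  0 <= x -> 0 <= y -> 0 <= z -> 0 < heron x y z -> 0 < x /\ 0 < y /\ 0 < z.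
Proof.
  intros hx hy hz h; split; [|split].
  - destruct hx as [hx | <-]; [exact hx|].
    assert (heron 0 y z = - (y^2 - z^2)^2) by (unfold heron; ring).
    pose proof (pow2_ge_0 (y^2 - z^2)); lra.
  - destruct hy as [hy | <-]; [exact hy|].
    assert (heron x 0 z = - (x^2 - z^2)^2) by (unfold heron; ring).
    pose proof (pow2_ge_0 (x^2 - z^2)); lra.
  - destruct hz as [hz | <-]; [exact hz|].
    assert (heron x y 0 = - (x^2 - y^2)^2) by (unfold heron; ring).
    pose proof (pow2_ge_0 (x^2 - y^2)); lra.
Qed.

Lemma sides_pos T : 0 < len_AB T /\ 0 < len_BC T /\ 0 < len_CA T.
Proof.
  exact (heron_pos_sides _ _ _ (pdist_nonneg _ _) (pdist_nonneg _ _) (pdist_nonneg _ _)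
           (heron_sides_pos T)).
Qed.

Definition angle_of_sides (x y z : R) : R :=
  acos ((x^2 + y^2 - z^2) / (2 * x * y)) * 180 / PI.

Lemma angle_deg_of_sides P Q S :
  0 < pdist Q P -> 0 < pdist Q S ->
  angle_deg P Q S = angle_of_sides (pdist Q P) (pdist Q S) (pdist P S).
Proof.
  intros h1 h2; unfold angle_deg, angle_of_sides; do 3 f_equal.
  rewrite !pdist_sq; unfold sqd; field; lra.
Qed.

Lemma angle_of_sides_comm x y z : angle_of_sides x y z = angle_of_sides y x z.
Proof. unfold angle_of_sides; do 3 f_equal; f_equal; ring. Qed.

Lemma angle_of_sides_cos x y z t :
  0 <= t <= PI -> (x^2 + y^2 - z^2) / (2 * x * y) = cos t -> angle_of_sides x y z = t * 180 / PI.
Proof. intros ht h; unfold angle_of_sides; rewrite h, acos_cos; auto. Qed.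

Lemma angles_30_60_90 s :
  0 < s ->
  angle_of_sides s (sqrt 3 * s) (2 * s) = 90 /\
  angle_of_sides s (2 * s) (sqrt 3 * s) = 60 /\
  angle_of_sides (sqrt 3 * s) (2 * s) s = 30.
Proof.
  intros hs.
  assert (h3 : sqrt 3 * sqrt 3 = 3) by (apply sqrt_sqrt; lra).
  assert (h3pos : 0 < sqrt 3) by (apply sqrt_lt_R0; lra).
  pose proof PI_RGT_0.
  split; [|split].
  - rewrite (angle_of_sides_cos _ _ _ (PI / 2)); [field; lra | split; lra |].
    rewrite cos_PI2; field_simplify_eq; nra.
  - rewrite (angle_of_sides_cos _ _ _ (PI / 3)); [field; lra | split; lra |].
    rewrite cos_PI3; field_simplify_eq; nra.
  - rewrite (angle_of_sides_cos _ _ _ (PI / 6)); [field; lra | split; lra |].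
    rewrite cos_PI6; field_simplify_eq; nra.
Qed.

Lemma sides_30_60_90_angles x y z :
  sides_30_60_90 x y z ->
  perm3 (angle_of_sides x z y) (angle_of_sides x y z) (angle_of_sides z y x) 90 60 30.
Proof.
  intros [s [hs hp]].
  destruct (angles_30_60_90 s hs) as [h90 [h60 h30]].
  pose proof (angle_of_sides_comm s (sqrt 3 * s) (2 * s)) as h90'.
  pose proof (angle_of_sides_comm s (2 * s) (sqrt 3 * s)) as h60'.
  pose proof (angle_of_sides_comm (sqrt 3 * s) (2 * s) s) as h30'.
  rewrite h90 in h90'; rewrite h60 in h60'; rewrite h30 in h30'.
  destruct_perm3; rewrite ?h90, ?h60, ?h30, <- ?h90', <- ?h60', <- ?h30'; pick_perm3.
Qed.

Lemma is_type_30_60_90 T :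
  sides_30_60_90 (len_AB T) (len_BC T) (len_CA T) -> is_type T 90 60 30.
Proof.
  intros h; destruct (sides_pos T) as [hAB [hBC hCA]].
  unfold len_AB, len_BC, len_CA in *.
  assert (hsym : forall p q, 0 < pdist p q -> 0 < pdist q p)
    by (intros p q; rewrite pdist_sym; auto).
  split; [lra | split; [lra |]]; apply perm3_Permutation.
  unfold angA, angB, angC; rewrite !angle_deg_of_sides by auto.
  rewrite (pdist_sym (tB T) (tA T)), (pdist_sym (tA T) (tC T)), (pdist_sym (tC T) (tB T)).
  exact (sides_30_60_90_angles _ _ _ h).
Qed.

Theorem lemma2p6 (T : plane_triangle) :
  ~ is_type T 90 60 30 -> forbidden F32 T.
Proof.
  intros hnot.
  destruct (sides_pos T) as [ha [hb hc]].
  destruct (approx_rigidity _ _ _ ha hb hc (heron_sides_pos T)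
              (fun h => hnot (is_type_30_60_90 T h))) as [d0 [[hd0 hd01] hrigid]].
  set (M := len_AB T + len_BC T + len_CA T).
  set (m := min_side T).
  assert (hm : 0 < m) by (unfold m, min_side; repeat apply Rmin_pos; assumption).
  set (e := d0 / (4 * (M + 1))).
  assert (hde : 4 * e * (M + 1) = d0) by (unfold e, M; field; lra).
  assert (he : 0 < e) by (unfold e, M; apply Rdiv_lt_0_compat; lra).
  exists (e / m); split; [apply Rlt_gt, Rdiv_lt_0_compat; assumption|].
  intros P _ _ [f [_ [_ hedges]]].
  assert (hem : e / m * m = e) by (field; lra).
  assert (hcong : forall i j k, In (i, j, k) (hg_edges F32) ->
            near_congruent (len_AB T) (len_BC T) (len_CA T) (4 * e * (M + e)) (f i) (f j) (f k)).
  { intros i j k hijk.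
    rewrite <- hem.
    apply eps_congruent_near; try (unfold M; lra).
    apply hedges in hijk; unfold HTP_edge in hijk; tauto. }
  apply (hrigid (4 * e * (M + e)) (f 0%nat) (f 1%nat) (f 2%nat) (f 3%nat) (f 4%nat)).
  - assert (0 <= M) by (unfold M; lra); split; nra.
  - apply hcong; simpl; tauto.
  - apply hcong; simpl; tauto.
  - apply hcong; simpl; tauto.
  - apply hcong; simpl; tauto.
Qed.
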